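(* Let $M$ be a closed manifold, $f\colon M\to M$ a map, $n\ge2$, and $k,l$ positive integers with $kl=n$. Let $\Phi_n(f)\colon M^n\to M^n$, $(x_1,\dots,x_n)\mapsto(f(x_n),f(x_1),\dots,f(x_{n-1}))$, which is equivariant for the cyclic action of $\mathbb{Z}_n=\langle g\rangle$, $g(x_1,\dots,x_n)=(x_n,x_1,\dots,x_{n-1})$. Identify $(M^n)^{\mathbb{Z}_k}$ (fixed points of the subgroup of order $k$) with $M^l$ via the first $l$ coordinates, and let $\Phi_n^k(f)$ be the restriction of $\Phi_n(f)$ to $(M^n)^{\mathbb{Z}_k}$; its fixed points are exactly the points $(x,f(x),\dots,f^{l-1}(x))$ (repeated $k$ times) with $f^l(x)=x$. Then \[\mathrm{Fix}^c(\Phi_n^k(f))\to\mathrm{Fix}^c(f^l),\qquad[(x,f(x),\dots,f^{l-1}(x))]\mapsto[x]\] is a well-defined bijection.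
   Context: For a self-map $h$ of a space $Y$, two fixed points $y,y'$ lie in the same fixed point class if there is a path $\alpha$ from $y$ to $y'$ with $\alpha\simeq h(\alpha)$ relative to endpoints; $\mathrm{Fix}^c(h)$ denotes the set of fixed point classes. $f^l$ is the $l$-fold composite of $f$. *)

From mathcomp Require Import all_boot all_order all_algebra.
From mathcomp Require Import all_classical all_reals all_analysis.
From mathcomp Require Import Rstruct Rstruct_topology.
From Stdlib Require Import Rdefinitions.
Notation R := Rdefinitions.R.

Set Implicit Arguments.
Unset Strict Implicit.
Unset Printing Implicit Defensive.

Local Open Scope classical_set_scope.
Local Open Scope ring_scope.

Definition unitI : set R := `[0%R, 1%R].

Definition local_chart (M : topologicalType) (d : nat) (U : set M)
    (phi : M -> 'rV[R]_d) : Prop :=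
  open U /\ open (phi @` U) /\ {in U &, injective phi} /\
  {within U, continuous phi} /\
  exists psi : 'rV[R]_d -> M,
    {within phi @` U, continuous psi} /\ (forall x, U x -> psi (phi x) = x).

Definition closed_manifold (M : topologicalType) : Prop :=
  compact [set: M] /\ hausdorff_space M /\
  exists d : nat, forall x : M, exists (U : set M) (phi : M -> 'rV[R]_d),
    U x /\ local_chart U phi.

(** Paths are maps R -> Y continuous on
    [0,1]; homotopies are maps R*R -> Y continuous on [0,1]x[0,1]. *)
Definition path_in (Y : topologicalType) (A : set Y) (alpha : R -> Y)
    (y y' : Y) : Prop :=
  {within unitI, continuous alpha} /\ alpha 0 = y /\ alpha 1 = y' /\
  (forall s, unitI s -> A (alpha s)).

Definition homotopic_rel_ends_in (Y : topologicalType) (A : set Y)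
    (alpha beta : R -> Y) : Prop :=
  exists H : R * R -> Y,
    {within unitI `*` unitI, continuous H} /\
    (forall s t, unitI s -> unitI t -> A (H (s, t))) /\
    (forall s, unitI s -> H (s, 0) = alpha s) /\
    (forall s, unitI s -> H (s, 1) = beta s) /\
    (forall t, unitI t -> H (0, t) = alpha 0) /\
    (forall t, unitI t -> H (1, t) = alpha 1).

Definition is_fixed (Y : Type) (h : Y -> Y) (y : Y) : Prop := h y = y.

Definition same_fp_class_in (Y : topologicalType) (A : set Y) (h : Y -> Y)
    (y y' : Y) : Prop :=
  A y /\ A y' /\ h y = y /\ h y' = y' /\
  exists alpha : R -> Y, path_in A alpha y y' /\
    homotopic_rel_ends_in A alpha (h \o alpha).

Definition same_fp_class (Y : topologicalType) (h : Y -> Y) (y y' : Y) :=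
  same_fp_class_in [set: Y] h y y'.

(* M^n with the product topology; tuples are indexed by 'I_n = {0,...,n-1}. *)
Definition Mpow (M : topologicalType) (n : nat) : topologicalType :=
  {ptws 'I_n -> M}.

Definition cyc_gen (M : topologicalType) (n : nat) (x : Mpow M n) : Mpow M n :=
  fun i => x (ord_pred i).

Definition Phi (M : topologicalType) (n : nat) (f : M -> M)
    (x : Mpow M n) : Mpow M n :=
  fun i => f (x (ord_pred i)).

(* (M^n)^{Z_k}, for k l = n: the fixed points of the subgroup of order k of
   Z_n = <g>, which is generated by g^l. *)
Definition cyc_fixed_set (M : topologicalType) (n l : nat) : set (Mpow M n) :=
  [set x | iter l (@cyc_gen M n) x = x].

(* On (M^n)^{Z_k} the l-th power of Phi_n(f) acts
   coordinatewise as f^l, so iterating a homotopy alpha ~ Phi_n(f) o alpha l times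
   and projecting to the first coordinate gives alpha_1 ~ f^l o alpha_1: the map
   on classes is well defined.  Conversely, a homotopy G : beta ~ f^l o beta lifts
   to the homotopy of tuples whose coordinates of index divisible by l follow G
   and whose other coordinates are f^j o beta; this gives injectivity, and orbit
   tuples give surjectivity. *)

From mathcomp Require Import all_boot all_order all_algebra.
From mathcomp Require Import all_classical all_reals all_analysis.
From mathcomp Require Import Rstruct Rstruct_topology.
From mathcomp Require Import lra.
Set Implicit Arguments.
Unset Strict Implicit.
Unset Printing Implicit Defensive.
Import Order.TTheory GRing.Theory Num.Theory.
Local Open Scope classical_set_scope.
Local Open Scope ring_scope.

Section OrdPredModn.
Context {n l : nat}.
Hypothesis l_dvd_n : (l %| n)%N.

Lemma ord_pred_modn (i : 'I_n) : ((ord_pred i).+1 = i %[mod l])%N.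
Proof. by rewrite -(modn_dvdm _ l_dvd_n) -[in RHS](ord_predK i). Qed.

Lemma iter_ord_pred_modn j (i : 'I_n) : (iter j (@ord_pred n) i + j = i %[mod l])%N.
Proof.
elim: j => [|j IHj]; first by rewrite addn0.
by rewrite iterS addnS -addSn -modnDml ord_pred_modn modnDml.
Qed.

Lemma iter_ord_pred_period (i : 'I_n) : (iter l (@ord_pred n) i = i %[mod l])%N.
Proof. by rewrite -(iter_ord_pred_modn l i) modnDr. Qed.

Lemma succ_ord_pred_modn (i : 'I_n) : (0 < l)%N ->
  ((ord_pred i %% l).+1 = if i %% l == 0 then l else i %% l)%N.
Proof.
move=> l_gt0; set r := (ord_pred i %% l)%N.
have -> : (i %% l = r.+1 %% l)%N by rewrite -ord_pred_modn -addn1 -modnDml addn1.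
have := ltn_pmod (ord_pred i) l_gt0; rewrite -/r leq_eqVlt => /orP[/eqP ->|lt_l].
  by rewrite modnn eqxx.
by rewrite modn_small.
Qed.

End OrdPredModn.

Lemma iter_ord_pred_self n (i : 'I_n) : iter i (@ord_pred n) i = 0 :> nat.
Proof.
have /eqP := iter_ord_pred_modn (dvdnn n) i i.
rewrite -[X in _ == X %[mod n]]add0n eqn_modDr mod0n modn_small //.
by move/eqP.
Qed.

Lemma iter_mod_period (T : Type) (f : T -> T) l x m :
  iter l f x = x -> iter m f x = iter (m %% l) f x.
Proof.
by move=> fx; rewrite {1}(divn_eq m l) addnC iterD iterM (iter_fix _ fx).
Qed.

(* [unitI] is written with Stdlib numerals, which [lra] does not identify with
   the ring numerals [0] and [1]. *)
Lemma unitIP (s : R) : unitI s <-> 0 <= s <= 1.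
Proof. by rewrite /unitI /= in_itv. Qed.

Lemma continuous_iter (T : topologicalType) (f : T -> T) j :
  continuous f -> continuous (iter j f).
Proof.
move=> cf; elim: j => [|j IHj] x /=; first exact: cvg_id.
exact: continuous_comp (IHj x) (cf _).
Qed.

Lemma continuous_within_comp (X Y Z : topologicalType) (A : set X) (B : set Y)
    (g : Y -> Z) (h : X -> Y) :
  {within B, continuous g} -> {within A, continuous h} -> h @` A `<=` B ->
  {within A, continuous (g \o h)}.
Proof.
move=> /subspace_continuousP cg /subspace_continuousP ch hAB.
apply/subspace_continuousP => x Ax.
have hBx : B (h x) by apply: hAB; exists x.
apply: (cvg_comp _ _ _ (cg _ hBx)) => W /= WB.
move: (ch x Ax _ WB); apply: (@filterS _ (nbhs x)) => y ABWy Ay.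
by apply: (ABWy Ay); apply: hAB; exists y.
Qed.

Lemma continuous_within_fst (X Y Z : topologicalType) (A : set X) (B : set Y)
    (a : X -> Z) :
  {within A, continuous a} -> {within A `*` B, continuous (a \o fst)}.
Proof.
move=> ca; apply: (continuous_within_comp ca); last by move=> _ [[x y] [Ax _] <-].
by apply: continuous_subspaceT => z; exact: cvg_fst.
Qed.

Lemma continuous_Mpow (X M : topologicalType) n (g : X -> Mpow M n) :
  (forall i, continuous (fun x => g x i)) -> continuous g.
Proof.
move=> cg x; apply/cvg_sup => i; move: x.
by apply: continuous_comp_initial; exact: cg.
Qed.

Lemma closed_setX (X Y : topologicalType) (A : set X) (B : set Y) :
  closed A -> closed B -> closed (A `*` B).
Proof.
move=> cA cB; apply: closedI.
  by apply: preimage_closed => // x _; exact: cvg_fst.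
by apply: preimage_closed => // x _; exact: cvg_snd.
Qed.

Lemma continuous_snd_affine (a b : R) :
  continuous (fun st : R * R => (st.1, a * st.2 + b)).
Proof.
have affine : continuous (fun t : R^o => (a * t + b : R^o)).
  by move=> t; apply: continuousD; [exact: mulrl_continuous | exact: cvg_cst].
move=> x; apply: (@cvg_pair _ _ _ _ (nbhs x.1) (nbhs (a * x.2 + b))).
  exact: cvg_fst.
apply: (@continuous_comp _ _ _ snd (fun t : R => a * t + b)); first exact: cvg_snd.
exact: affine.
Qed.

Definition stack_homotopy (Y : Type) (H1 H2 : R * R -> Y) (st : R * R) : Y :=
  if st.2 <= 2^-1 then H1 (st.1, 2 * st.2) else H2 (st.1, 2 * st.2 - 1).

Lemma continuous_stack_homotopy (Y : topologicalType) (H1 H2 : R * R -> Y) :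
  {within unitI `*` unitI, continuous H1} ->
  {within unitI `*` unitI, continuous H2} ->
  (forall s, unitI s -> H1 (s, 1) = H2 (s, 0)) ->
  {within unitI `*` unitI, continuous (stack_homotopy H1 H2)}.
Proof.
move=> cH1 cH2 H12.
have -> : unitI `*` unitI = unitI `*` `[0, 2^-1] `|` unitI `*` `[2^-1, 1].
  apply/seteqP; split => -[s t] /=; rewrite !in_itv /=.
    move=> [Is /unitIP/andP[t0 t1]].
    by have [h|h] := leP t 2^-1; [left|right]; split => //; apply/andP; lra.
  by move=> [] [Is /andP[t0 t1]]; split => //; apply/unitIP/andP; lra.
have closed_piece (a b : R) : closed (unitI `*` `[a, b]).
  by apply: closed_setX; exact: interval_closed.
have reparam (H : R * R -> Y) (a b c d : R) :
    {within unitI `*` unitI, continuous H} ->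
    0 <= a * c + b -> a * d + b <= 1 -> 0 <= a ->
    {within unitI `*` `[c, d], continuous (fun st => H (st.1, a * st.2 + b))}.
  move=> cH h0 h1 a0; apply: (continuous_within_comp cH).
    by apply: continuous_subspaceT; exact: continuous_snd_affine.
  move=> _ [[s t] [Is tcd] <-]; move: tcd; rewrite /= in_itv /= => /andP[tc td].
  by split => //; apply/unitIP/andP; split; nra.
apply: withinU_continuous; [exact: closed_piece | exact: closed_piece | |].
- apply: (subspace_eq_continuous _ (reparam _ 2 0 0 2^-1 cH1 _ _ _)); try lra.
  move=> [s t]; rewrite inE /= in_itv /= => -[_ /andP[_ t1]].
  by rewrite /from_subspace /stack_homotopy /= t1 addr0.
- apply: (subspace_eq_continuous _ (reparam _ 2 (-1) 2^-1 1 cH2 _ _ _)); try lra.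
  move=> [s t]; rewrite inE /= in_itv /= => -[Is /andP[t0 t1]].
  rewrite /from_subspace /stack_homotopy /=; case: ifP => // th.
  have -> : t = 2^-1 by lra.
  have -> : 2 * 2^-1 = 1 :> R by lra.
  have -> : 1 - 1 = 0 :> R by lra.
  by rewrite H12.
Qed.

Section HomotopyRelEnds.
Variable Y : topologicalType.
Implicit Types (A : set Y) (a b c : R -> Y).

Lemma homotopic_rel_ends_refl A a :
  {within unitI, continuous a} -> (forall s, unitI s -> A (a s)) ->
  homotopic_rel_ends_in A a a.
Proof.
move=> ca aA; exists (a \o fst); split; first exact: continuous_within_fst.
by do 5?split => //; move=> s t Is _; exact: aA.
Qed.

Lemma homotopic_rel_ends_trans A a b c :
  homotopic_rel_ends_in A a b -> homotopic_rel_ends_in A b c ->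
  homotopic_rel_ends_in A a c.
Proof.
move=> [H1 [cH1 [H1A [H10 [H11 [H1l H1r]]]]]] [H2 [cH2 [H2A [H20 [H21 [H2l H2r]]]]]].
have I0 : unitI 0 by apply/unitIP; lra.
have I1 : unitI 1 by apply/unitIP; lra.
have b0 : b 0 = a 0 by rewrite -H11 // H1l.
have b1 : b 1 = a 1 by rewrite -H11 // H1r.
have half0 : (0 : R) <= 2^-1 by lra.
have half1 : ((1 : R) <= 2^-1) = false by apply/negbTE; rewrite -ltNge; lra.
exists (stack_homotopy H1 H2); split.
  by apply: continuous_stack_homotopy => // s Is; rewrite H11 // H20.
rewrite /stack_homotopy /=; split.
  move=> s t Is /unitIP It; case: ifP => th.
    by apply: H1A => //; apply/unitIP; lra.
  by apply: H2A => //; apply/unitIP; move/negbT: th; rewrite -ltNge; lra.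
split; first by move=> s Is; rewrite half0 mulr0 H10.
split.
  move=> s Is; rewrite half1 mulr1.
  have -> : 2 + -1 = 1 :> R by lra.
  by rewrite H21.
split=> t /unitIP It; case: ifP => th.
- by rewrite H1l //; apply/unitIP; lra.
- by rewrite H2l ?b0 //; apply/unitIP; move/negbT: th; rewrite -ltNge; lra.
- by rewrite H1r //; apply/unitIP; lra.
- by rewrite H2r ?b1 //; apply/unitIP; move/negbT: th; rewrite -ltNge; lra.
Qed.

Lemma homotopic_rel_ends_comp (Z : topologicalType) A (g : Y -> Z) a b :
  continuous g -> homotopic_rel_ends_in A a b ->
  homotopic_rel_ends_in setT (g \o a) (g \o b).
Proof.
move=> cg [H [cH [_ [H0 [H1 [Hl Hr]]]]]]; exists (g \o H); split.
  by apply: within_continuous_comp => // x _; exact: cg.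
split => //; split; first by move=> s Is; rewrite /= H0.
split; first by move=> s Is; rewrite /= H1.
by split => t It; rewrite /= ?Hl ?Hr.
Qed.

Lemma homotopic_rel_ends_eqr A a b b' :
  (forall s, unitI s -> b s = b' s) ->
  homotopic_rel_ends_in A a b -> homotopic_rel_ends_in A a b'.
Proof.
move=> bb' [H [cH [HA [H0 [H1 Hends]]]]]; exists H.
do 4!split => //.
by move=> s Is; rewrite H1 // bb'.
Qed.

Lemma homotopic_rel_ends_iter A (h : Y -> Y) a j :
  continuous h -> {within unitI, continuous a} ->
  homotopic_rel_ends_in A a (h \o a) ->
  homotopic_rel_ends_in setT a (iter j h \o a).
Proof.
move=> ch ca aha; elim: j => [|j IHj]; first exact: homotopic_rel_ends_refl.
apply: (homotopic_rel_ends_trans IHj).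
apply: homotopic_rel_ends_eqr _ (homotopic_rel_ends_comp (continuous_iter (j := j) ch) aha).
by move=> s _; rewrite /= -iterSr.
Qed.

End HomotopyRelEnds.

Section CyclicConstruction.
Variables (M : topologicalType) (n : nat) (f : M -> M).

Lemma iter_cyc_gen j (x : Mpow M n) i :
  iter j (@cyc_gen M n) x i = x (iter j (@ord_pred n) i).
Proof. by elim: j i => [|j IHj] i //; rewrite iterS /cyc_gen IHj -iterSr. Qed.

Lemma iter_Phi j (x : Mpow M n) i :
  iter j (Phi f) x i = iter j f (x (iter j (@ord_pred n) i)).
Proof. by elim: j i => [|j IHj] i //; rewrite iterS /Phi IHj -iterSr. Qed.

Lemma iter_Phi_cyc_fixed l (x : Mpow M n) i :
  cyc_fixed_set l x -> iter l (Phi f) x i = iter l f (x i).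
Proof. by move=> xA; rewrite iter_Phi -iter_cyc_gen xA. Qed.

Lemma Phi_fixed_orbit (i0 : 'I_n) (p : Mpow M n) i :
  i0 = 0 :> nat -> Phi f p = p -> p i = iter i f (p i0).
Proof.
move=> i0_0 pP; rewrite -{1}(iter_fix i pP) iter_Phi.
by congr (iter _ _ (p _)); apply: val_inj; rewrite /= iter_ord_pred_self i0_0.
Qed.

Lemma continuous_Mpow_coord i : continuous (fun x : Mpow M n => x i).
Proof. exact: (@proj_continuous _ (fun=> M) i). Qed.

Lemma continuous_Phi : continuous f -> continuous (@Phi M n f).
Proof.
move=> cf; apply: continuous_Mpow => i x.
apply: (@continuous_comp _ _ _ (fun y : Mpow M n => y (ord_pred i)) f x).
  exact: continuous_Mpow_coord.
exact: cf.
Qed.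

Lemma same_fp_class_coord l (p p' : Mpow M n) i : continuous f ->
  same_fp_class_in (cyc_fixed_set l) (Phi f) p p' ->
  same_fp_class (iter l f) (p i) (p' i).
Proof.
move=> cf [pA [p'A [pP [p'P [alpha [[ca [a0 [a1 aA]]] aH]]]]]].
have fixed q : cyc_fixed_set l q -> Phi f q = q -> iter l f (q i) = q i.
  by move=> qA qP; rewrite -iter_Phi_cyc_fixed // iter_fix.
split => //; split => //; split; first exact: fixed.
split; first exact: fixed.
exists (fun s => alpha s i); split.
  split; last by rewrite a0 a1.
  apply: (@within_continuous_comp _ _ _ _ alpha (fun q : Mpow M n => q i)) ca.
  by move=> q _; exact: continuous_Mpow_coord.
apply: homotopic_rel_ends_eqr _ (homotopic_rel_ends_comp (continuous_Mpow_coord (i := i))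
  (homotopic_rel_ends_iter l (continuous_Phi cf) ca aH)).
by move=> s Is; rewrite /= iter_Phi_cyc_fixed //; exact: aA.
Qed.

Definition orbit_tuple l (y x : M) : Mpow M n :=
  fun i => if (i %% l == 0)%N then y else iter (i %% l) f x.

Lemma orbit_tupleE l x i : orbit_tuple l x x i = iter (i %% l) f x.
Proof. by rewrite /orbit_tuple; case: eqP => // ->. Qed.

Lemma continuous_orbit_tuple l (X : topologicalType) (D : set X) (y x : X -> M) :
  continuous f -> {within D, continuous y} -> {within D, continuous x} ->
  {within D, continuous (fun z => orbit_tuple l (y z) (x z))}.
Proof.
move=> cf cy cx; apply: continuous_Mpow => i; rewrite /from_subspace /orbit_tuple /=.
case: (i %% l == 0)%N; first exact: cy.
by apply: within_continuous_comp cx => z _; exact: continuous_iter.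
Qed.

Section DivisorPeriod.
Variable l : nat.
Hypotheses (l_gt0 : (0 < l)%N) (l_dvd_n : (l %| n)%N).

Lemma orbit_tuple_cyc_fixed y x : cyc_fixed_set l (orbit_tuple l y x).
Proof.
by apply/funext => i; rewrite iter_cyc_gen /orbit_tuple iter_ord_pred_period.
Qed.

Lemma Phi_orbit_tuple x : Phi f (orbit_tuple l x x) = orbit_tuple l (iter l f x) x.
Proof.
apply/funext => i; rewrite /Phi orbit_tupleE -iterS succ_ord_pred_modn //.
by rewrite /orbit_tuple; case: ifP.
Qed.

Lemma fixed_orbit_tuple x : iter l f x = x ->
  cyc_fixed_set l (orbit_tuple l x x) /\ Phi f (orbit_tuple l x x) = orbit_tuple l x x.
Proof. by move=> fx; rewrite Phi_orbit_tuple fx; split=> //; exact: orbit_tuple_cyc_fixed. Qed.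

Lemma cyc_Phi_fixedP (i0 : 'I_n) (p : Mpow M n) : i0 = 0 :> nat ->
  (cyc_fixed_set l p /\ Phi f p = p) <->
  (iter l f (p i0) = p i0 /\ forall i : 'I_n, p i = iter (i %% l) f (p i0)).
Proof.
move=> i0_0; split => [[pA pP] | [fp0 pE]].
  have fp0 : iter l f (p i0) = p i0 by rewrite -iter_Phi_cyc_fixed // iter_fix.
  by split=> // i; rewrite -(iter_mod_period _ fp0) -Phi_fixed_orbit.
suff -> : p = orbit_tuple l (p i0) (p i0) by exact: fixed_orbit_tuple.
by apply/funext => i; rewrite orbit_tupleE pE.
Qed.

Lemma same_fp_class_lift (i0 : 'I_n) (p p' : Mpow M n) :
  i0 = 0 :> nat -> continuous f ->
  cyc_fixed_set l p -> Phi f p = p -> cyc_fixed_set l p' -> Phi f p' = p' ->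
  same_fp_class (iter l f) (p i0) (p' i0) ->
  same_fp_class_in (cyc_fixed_set l) (Phi f) p p'.
Proof.
move=> i0_0 cf pA pP p'A p'P.
move=> [_ [_ [_ [_ [beta [[cb [b0 [b1 _]]] [G [cG [_ [G0 [G1 [Gl Gr]]]]]]]]]]]].
have orbitE q : cyc_fixed_set l q -> Phi f q = q -> orbit_tuple l (q i0) (q i0) = q.
  move=> qA qP; have [_ qE] := (cyc_Phi_fixedP q i0_0).1 (conj qA qP).
  by apply/funext => i; rewrite orbit_tupleE -qE.
pose alpha s := orbit_tuple l (beta s) (beta s).
split => //; split => //; split => //; split => //.
exists alpha; split.
  split; first exact: continuous_orbit_tuple.
  rewrite /alpha b0 b1 !orbitE //; do 2!split => //.
  by move=> s _; exact: orbit_tuple_cyc_fixed.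
exists (fun st => orbit_tuple l (G st) (beta st.1)); split.
  exact: continuous_orbit_tuple cf cG (continuous_within_fst cb).
split; first by move=> s t _ _; exact: orbit_tuple_cyc_fixed.
split; first by move=> s Is; rewrite /= G0.
split; first by move=> s Is; rewrite /= G1 // Phi_orbit_tuple.
by split=> t It; rewrite /= ?Gl ?Gr.
Qed.

End DivisorPeriod.
End CyclicConstruction.

Theorem lemma5p7 (M : topologicalType) (f : M -> M) (n k l : nat)
    (hM : closed_manifold M) (hf : continuous f)
    (hn : (2 <= n)%N) (hk : (0 < k)%N) (hl : (0 < l)%N) (hkl : (k * l)%N = n)
    (i0 : 'I_n) (hi0 : nat_of_ord i0 = 0%N) :
  (* fixed points of Phi_n^k(f) are exactly (x, f x, ..., f^{l-1} x) repeated,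
     with f^l x = x *)
  (forall p : Mpow M n,
     (@cyc_fixed_set M n l p /\ Phi f p = p) <->
     (iter l f (p i0) = p i0 /\
      forall i : 'I_n, p i = iter (nat_of_ord i %% l) f (p i0))) /\
  (* well defined *)
  (forall p p' : Mpow M n,
     same_fp_class_in (@cyc_fixed_set M n l) (Phi f) p p' ->
     same_fp_class (iter l f) (p i0) (p' i0)) /\
  (* injective *)
  (forall p p' : Mpow M n,
     @cyc_fixed_set M n l p -> Phi f p = p ->
     @cyc_fixed_set M n l p' -> Phi f p' = p' ->
     same_fp_class (iter l f) (p i0) (p' i0) ->
     same_fp_class_in (@cyc_fixed_set M n l) (Phi f) p p') /\
  (* surjective *)
  (forall x : M, iter l f x = x ->
     exists p : Mpow M n,
       @cyc_fixed_set M n l p /\ Phi f p = p /\ p i0 = x).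
Proof.
have l_dvd_n : (l %| n)%N by rewrite -hkl dvdn_mull.
split; first by move=> p; exact: cyc_Phi_fixedP.
split; first by move=> p p'; exact: same_fp_class_coord.
split; first by move=> p p'; exact: same_fp_class_lift.
move=> x fx; exists (orbit_tuple f l x x).
by rewrite orbit_tupleE hi0 mod0n; have [] := fixed_orbit_tuple hl l_dvd_n fx.
Qed.
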